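(* Let $X$ be a (real or complex) Banach space, let $K$ be a weak*-compact convex subset of $X^{*}$ and let $B\subseteq K$ be a set that (I)-generates $K$. Let $P:\ell^{\infty}\to\ell^{\infty}$ be a map with $P(0)=0$, and for $n\in\mathbb{N}$ let $P_n:\ell^\infty\to[0,\infty)$ be the map $\mathbf{x}\mapsto |(P\mathbf{x})(n)|$. Suppose that: (i) for each $n$, the map $P_n$ is convex, and it is lower semicontinuous with respect to $\tau_p$ on every bounded subset of $\ell^{\infty}$; (ii) there exists $M\geq 0$ such that $P_n(\mathbf{x}+\mathbf{y})\leq M(P_n\mathbf{x}+P_n\mathbf{y})$ for all $n\in\mathbb{N}$ and all $\mathbf{x},\mathbf{y}\in\ell^{\infty}$; (iii) $P$ is continuous at $0$ with respect to the norm topology of $\ell^{\infty}$. Then for every bounded sequence $\mathbf{x}=(x_n)_{n\in\mathbb{N}}$ in $X$, \[\sup_{x^{*}\in K}\limsup_{n\to\infty}P_n(x^{*}(\mathbf{x}))\leq M\sup_{x^{*}\in B}\limsup_{n\to\infty}P_n(x^{*}(\mathbf{x})),\] where $x^{*}(\mathbf{x})$ denotes the sequence $(x^{*}(x_n))_{n\in\mathbb{N}}\in\ell^\infty$.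
   Context: $\tau_p$ denotes the topology of pointwise (coordinatewise) convergence on $\ell^{\infty}$. For a weak*-compact convex $K\subseteq X^{*}$, a subset $B\subseteq K$ is said to (I)-generate $K$ if whenever $B=\bigcup_{n=1}^{\infty}B_n$ is written as a countable union of subsets, $K$ equals the norm-closure of the convex hull of $\bigcup_{n=1}^{\infty}\overline{\mathrm{co}}^{w^*}(B_n)$, where $\overline{\mathrm{co}}^{w^*}(B_n)$ is the weak*-closed convex hull of $B_n$. *)

From HB Require Import structures.
From mathcomp Require Import all_boot all_order all_algebra.
From mathcomp Require Import all_classical all_reals all_analysis.
From mathcomp Require Import complex.
Import Order.TTheory GRing.Theory Num.Theory.
Import numFieldNormedType.Exports.

Set Implicit Arguments.
Unset Strict Implicit.
Unset Printing Implicit Defensive.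

Local Open Scope classical_set_scope.
Local Open Scope ring_scope.

(* The scalar field is either R (real case) or R[i] (complex case);
   [toR] converts a (real-valued) scalar such as a norm into R:
   the identity in the real case, the real part in the complex case. *)
Inductive RorC (R : realType) : forall K : numFieldType, (K -> R) -> Prop :=
| RorC_real : @RorC R (R : numFieldType) (fun x : R => x)
| RorC_complex : @RorC R (R[i] : numFieldType) (@complex.Re R).

Arguments RorC : clear implicits.

Section Defs.
Context {K : numFieldType}.

(* Convexity of a set of K-valued functions (functionals, sequences),
   with real coefficients t in [0,1]. *)
Definition convex_fset {T : Type} (C : set (T -> K)) : Prop :=
  forall f g, C f -> C g -> forall t : K, 0 <= t <= 1 ->
    C (fun x => t * f x + (1 - t) * g x).

Definition conv_hull {T : Type} (S : set (T -> K)) : set (T -> K) :=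
  \bigcap_(C in [set C | S `<=` C /\ convex_fset C]) C.

Definition linf_bounded (u : nat -> K) : Prop :=
  exists C : K, forall n, `|u n| <= C.

Definition linf_bounded_set (A : set (nat -> K)) : Prop :=
  exists C : K, forall u, A u -> forall n, `|u n| <= C.

Definition ptws_lsc_on (A : set (nat -> K)) (F : (nat -> K) -> K) : Prop :=
  forall u, A u -> forall c : K, c < F u ->
    \forall v \near (u : {ptws nat -> K}), A v -> c < F v.

Context {X : normedModType K}.

Definition dual : set (X -> K) :=
  [set f | (forall (a : K) (x y : X), f (a *: x + y) = a * f x + f y)
           /\ continuous f].

Definition wstar_closed (D : set (X -> K)) : Prop :=
  exists C : set {ptws X -> K}, closed C /\ D = dual `&` C.

Definition wstar_closed_conv_hull (S : set (X -> K)) : set (X -> K) :=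
  dual `&` \bigcap_(D in [set D | D `<=` dual /\ S `<=` D /\ convex_fset D
                                  /\ wstar_closed D]) D.

(* norm closure in X^* (dual norm: ||g - f|| <= e iff |g x - f x| <= e ||x||) *)
Definition dual_norm_closure (S : set (X -> K)) : set (X -> K) :=
  [set g | dual g /\ forall e : K, 0 < e ->
      exists2 f, S f & forall x : X, `|g x - f x| <= e * `|x|].

Definition I_generates (Kset B : set (X -> K)) : Prop :=
  forall Bn : nat -> set (X -> K), B = \bigcup_n Bn n ->
    Kset = dual_norm_closure
             (conv_hull (\bigcup_n wstar_closed_conv_hull (Bn n))).

End Defs.

From HB Require Import structures.
From mathcomp Require Import all_boot all_order all_algebra.
From mathcomp Require Import all_classical all_reals all_analysis.
From mathcomp Require Import complex.
From mathcomp Require Import ring.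
Import Order.TTheory GRing.Theory Num.Theory.
Import numFieldNormedType.Exports.

Set Implicit Arguments.
Unset Strict Implicit.
Unset Printing Implicit Defensive.

Local Open Scope classical_set_scope.
Local Open Scope ring_scope.

(* Fix c above sup_{b in B} limsup_n P_n(b(x)) and let D_k be the set of those
   f in X^* with |f(x_m)| <= k for all m and P_n(f(x)) <= c for all n >= k.
   Each D_k is convex because the P_n are, and weak*-closed because f |-> f(x)
   is weak*-to-tau_p continuous and the P_n are tau_p-lower semicontinuous on
   bounded sets; the D_k increase, so their union is convex. As
   B = U_k (B n D_k), (I)-generation puts every g in K in the norm closure of
   U_k D_k. If f in D_k is close to g in norm, f(x) is uniformly close to g(x),
   and continuity of P at 0 with the quasi-triangle inequality give
   P_n(g(x)) <= M (c + e) for n >= k. *)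

Section RealPart.
Variables (R : realType) (K : numFieldType) (toR : K -> R).
Hypothesis hK : RorC R K toR.

Lemma RorC_toRD (a b : K) : toR (a + b) = toR a + toR b.
Proof. by case: hK a b => // -[? ?] [? ?]. Qed.

Lemma RorC_toR0 : toR 0 = 0.
Proof. by case: hK. Qed.

Lemma RorC_toR_nat (n : nat) : toR n%:R = n%:R.
Proof.
have toR1 : toR 1 = 1 by case: hK.
elim: n => [|n IHn]; first exact: RorC_toR0.
by rewrite !mulrS RorC_toRD toR1 IHn.
Qed.

Lemma RorC_toRM (a b : K) : 0 <= a -> toR (a * b) = toR a * toR b.
Proof.
case: hK a b => // -[a1 a2] [b1 b2]; rewrite lecE /= => /andP[/eqP -> _].
by simpc.
Qed.

Lemma RorC_toR_homo : {homo toR : a b / a <= b}.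
Proof. by case: hK => // -[? ?] [? ?]; rewrite lecE => /andP[]. Qed.

Lemma RorC_ler_toR : {in Num.nneg &, {mono toR : a b / a <= b}}.
Proof.
case: hK => // -[a1 a2] [b1 b2]; rewrite !qualifE /= !lecE /=.
by move=> /andP[/eqP <- _] /andP[/eqP <- _]; rewrite eqxx.
Qed.

Lemma RorC_ltr_toR : {in Num.nneg &, {mono toR : a b / a < b}}.
Proof.
case: hK => // -[a1 a2] [b1 b2]; rewrite !qualifE /= !lecE /=.
by move=> /andP[/eqP <- _] /andP[/eqP <- _]; rewrite ltcE /= eqxx.
Qed.

Lemma RorC_toR_onto (r : R) : 0 <= r -> exists2 c : K, 0 <= c & toR c = r.
Proof. by case: hK => r0; [exists r | exists r%:C%C; rewrite ?lecR]. Qed.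

Lemma RorC_toR_ge0 (a : K) : 0 <= a -> 0 <= toR a.
Proof. by move/RorC_toR_homo; rewrite RorC_toR0. Qed.

Lemma RorC_toR_gt0 (a : K) : 0 <= a -> (0 < toR a) = (0 < a).
Proof. by move=> a0; rewrite -RorC_toR0 RorC_ltr_toR ?nnegrE. Qed.

Lemma RorC_nneg_le_nat (a : K) : 0 <= a -> exists k : nat, a <= k%:R.
Proof.
move=> a0; exists (Num.bound (toR a)).
rewrite -RorC_ler_toR ?qualifE //= RorC_toR_nat.
exact/ltW/archi_boundP/RorC_toR_ge0.
Qed.

Lemma limn_esup_toR_le (w : nat -> K) (a : K) (k : nat) :
  (forall n, (k <= n)%N -> `|w n| <= a) ->
  (limn_esup (fun n => (toR `|w n|)%:E) <= (toR a)%:E)%E.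
Proof.
move=> wa; rewrite /limn_esup limf_esupE.
apply: ge_ereal_inf; exists (ereal_sup ((fun n => (toR `|w n|)%:E) @` [set n | (k <= n)%N])).
  by exists [set n | (k <= n)%N] => //; exists k.
by apply: ge_ereal_sup => _ [n kn <-]; rewrite lee_fin RorC_toR_homo ?wa.
Qed.

Lemma limn_esup_toR_lt (w : nat -> K) (c : K) : 0 <= c ->
  (limn_esup (fun n => (toR `|w n|)%:E) < (toR c)%:E)%E ->
  exists k, forall n, (k <= n)%N -> `|w n| <= c.
Proof.
rewrite /limn_esup limf_esupE => c0 /ereal_inf_lt [_ [V [k _ kV] <-] Vc].
exists k => n kn; rewrite -RorC_ler_toR ?qualifE //= -lee_fin ltW //.
by apply: le_lt_trans Vc; apply: ereal_sup_ubound; exists n => //; apply: kV.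
Qed.

Lemma limn_esup_toR_le_scale (I : Type) (B : set I) (w : I -> nat -> K)
    (v : nat -> K) (M : K) : 0 < M -> (exists b, B b) ->
  (forall c : K, 0 <= c ->
     (forall b, B b -> exists k, forall n, (k <= n)%N -> `|w b n| <= c) ->
     forall e : K, 0 < e -> exists k, forall n, (k <= n)%N -> `|v n| <= M * (c + e)) ->
  (limn_esup (fun n => (toR `|v n|)%:E) <=
   (toR M)%:E * ereal_sup [set limn_esup (fun n => (toR `|w b n|)%:E) | b in B])%E.
Proof.
move=> M_gt0 [b0 Bb0] v_bound.
have toRM_gt0 : 0 < toR M by rewrite RorC_toR_gt0 ?ltW.
have Lw_ge0 b : (0 <= limn_esup (fun n => (toR `|w b n|)%:E))%E.
  by apply: limf_esup_ge0 => // n; rewrite lee_fin RorC_toR_ge0.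
have Lw_le := @ereal_sup_ubound _ [set limn_esup (fun n => (toR `|w b n|)%:E) | b in B].
have := le_trans (Lw_ge0 b0) (Lw_le _ (ex_intro2 _ _ b0 Bb0 erefl)).
case: (ereal_sup _) Lw_le => [e | | ] Lw_le; last by rewrite leeNy_eq.
- rewrite lee_fin => e0; apply/lee_addgt0Pr => eps eps0; pose d := eps / (2 * toR M).
  have d0 : 0 < d by rewrite divr_gt0 // mulr_gt0.
  have [c c0 toRc] := RorC_toR_onto (addr_ge0 e0 (ltW d0)).
  have [dK dK0 toRdK] := RorC_toR_onto (ltW d0).
  have dK_gt0 : 0 < dK by rewrite -RorC_toR_gt0 // toRdK.
  have wc b : B b -> exists k, forall n, (k <= n)%N -> `|w b n| <= c.
    move=> Bb; apply: limn_esup_toR_lt c0 _; rewrite toRc.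
    by apply: le_lt_trans (Lw_le _ (ex_intro2 _ _ b Bb erefl)) _; rewrite lte_fin ltrDl.
  have [k vk] := v_bound c c0 wc dK dK_gt0.
  apply: le_trans (limn_esup_toR_le vk) _.
  rewrite (RorC_toRM _ (ltW M_gt0)) RorC_toRD toRc toRdK -EFinD lee_fin.
  suff -> : toR M * (e + d + d) = toR M * e + eps by [].
  by rewrite /d; field; rewrite gt_eqF.
- by move=> _; rewrite gt0_muley ?lte_fin // leey.
Qed.

End RealPart.

Section ConvexHulls.
Context {K : numFieldType}.

Lemma conv_hull_min {T : Type} (S C : set (T -> K)) :
  convex_fset C -> S `<=` C -> conv_hull S `<=` C.
Proof. by move=> Cconv SC f; apply. Qed.

Lemma convex_bigcup_nondecreasing {T : Type} (C : nat -> set (T -> K)) :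
  (forall i j, (i <= j)%N -> C i `<=` C j) -> (forall k, convex_fset (C k)) ->
  convex_fset (\bigcup_k C k).
Proof.
move=> Cmono Cconv f g [i _ fi] [j _ gj] t t01; exists (maxn i j) => //.
by apply: Cconv => //; [apply: Cmono fi | apply: Cmono gj]; rewrite ?leq_maxl ?leq_maxr.
Qed.

Context {X : normedModType K}.

Lemma wstar_closed_conv_hull_min (S D : set (X -> K)) :
  D `<=` dual -> convex_fset D -> wstar_closed D -> S `<=` D ->
  wstar_closed_conv_hull S `<=` D.
Proof. by move=> Ddual Dconv Dclosed SD f [_]; apply. Qed.

Lemma I_generates_set0 (Kset : set (X -> K)) : I_generates Kset set0 -> Kset = set0.
Proof.
move=> Kgen; rewrite (Kgen (fun=> set0)); last by rewrite bigcup0.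
have hull0 : conv_hull (\bigcup_(n : nat) wstar_closed_conv_hull (set0 : set (X -> K)))
    `<=` set0.
  apply: conv_hull_min => [f g [] // | f [n _]]; move: f.
  apply: wstar_closed_conv_hull_min => //.
  by exists set0; rewrite setI0; split => //; exact: closed0.
by apply/seteqP; split => // g [_ /(_ 1 ltr01) [f /hull0]].
Qed.

Lemma dual_bounded_seq (f : X -> K) (x : nat -> X) (C : K) :
  dual f -> (forall n, `|x n| <= C) -> exists2 b : K, 0 <= b & forall n, `|f (x n)| <= b.
Proof.
move=> [flin fcont] xC.
pose fL : {linear X -> K^o} := HB.pack f (GRing.isLinear.Build K X K^o *:%R f flin).
have /linear_boundedP[r [rreal fr]] :=
  continuous_linear_bounded 0 (fcont 0 : {for 0, continuous fL}).
have rs : r < `|r| + 1 by rewrite (le_lt_trans (real_ler_norm rreal)) // ltrDl.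
have C0 : 0 <= C := le_trans (normr_ge0 _) (xC 0%N).
exists ((`|r| + 1) * C); first by rewrite mulr_ge0 // addr_ge0.
move=> n; apply: le_trans (fr _ rs (x n)) _.
by rewrite ler_wpM2l // addr_ge0.
Qed.

Lemma dual_convex : convex_fset (@dual K X).
Proof.
move=> f g [flin fcont] [glin gcont] t _; split.
  by move=> a y z; rewrite flin glin; ring.
move=> y; apply: cvgD; apply: cvgM;
  [exact: cvg_cst | exact: fcont | exact: cvg_cst | exact: gcont].
Qed.

End ConvexHulls.

Lemma ptws_precomp_continuous (T : eqType) (K : topologicalType) (x : nat -> T) :
  continuous (fun g : {ptws T -> K} => (fun n => g (x n)) : {ptws nat -> K}).
Proof.
move=> g; apply/cvg_sup; first by apply: fmap_filter; apply: nbhs_filter.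
move=> i; apply: (@continuous_comp_initial _ _ _ (@proj nat (fun _ => K) i)
  (fun g : {ptws T -> K} => (fun n => g (x n)) : {ptws nat -> K})).
exact: (@proj_continuous T (fun _ => K) (x i)).
Qed.

Section PointwiseTopology.
Context {K : numFieldType}.

Lemma closed_real_sublevelI (T : topologicalType) (A : set T) (I : Type) (D : set I)
    (F : I -> T -> K) (c : K) :
  closed A -> c \is Num.real -> (forall i t, F i t \is Num.real) ->
  (forall i t, D i -> A t -> c < F i t -> \forall s \near t, A s -> c < F i s) ->
  closed (A `&` [set t | forall i, D i -> F i t <= c]).
Proof.
move=> Aclosed creal Freal Flsc t tcl.
have At : A t := Aclosed t (closureS (@subIsetl _ A _) tcl).
split => // i Di; rewrite real_leNgt ?Freal //; apply/negP => cF.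
have [s [[As sle] Fs]] := tcl _ (Flsc i t Di At cF).
by have := sle i Di; rewrite real_leNgt ?Freal // (Fs As).
Qed.

Lemma closed_ptws_bounded_along (T : eqType) (x : nat -> T) (a : K) : a \is Num.real ->
  closed [set g : {ptws T -> K} | forall m, `|g (x m)| <= a].
Proof.
move=> areal.
have -> : [set g : {ptws T -> K} | forall m, `|g (x m)| <= a] =
    setT `&` [set g | forall m, setT m -> `|g (x m)| <= a].
  by apply/seteqP; split => g /=; [move=> ga; split => // m _ | move=> [_ ga] m];
    apply: ga.
apply: (closed_real_sublevelI closedT areal (fun _ _ => normr_real _)).
move=> m g _ _ ag.
have gcvg := cvg_norm (@proj_continuous T (fun _ => K) (x m) g).
have /(_ (nbhs_filter g)) := real_cvgr_gt _ (normr_real _) (gcvg (nbhs_filter g)) _ ag.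
by apply: (@filterS _ _ (nbhs_filter g)) => h /= + _; apply; exact: normr_real.
Qed.

End PointwiseTopology.

Section TailSublevels.
Context {K : numFieldType} {X : normedModType K}.
Variables (P : (nat -> K) -> nat -> K) (M : K) (x : nat -> X).
Hypothesis hM : 0 <= M.
Hypothesis hP0 : P (fun _ => 0) = (fun _ => 0).
Hypothesis hconv : forall (n : nat) (u v : nat -> K), linf_bounded u -> linf_bounded v ->
  forall t : K, 0 <= t <= 1 ->
  `|P (fun i => t * u i + (1 - t) * v i) n| <= t * `|P u n| + (1 - t) * `|P v n|.
Hypothesis hlsc : forall (n : nat) (A : set (nat -> K)), linf_bounded_set A ->
  ptws_lsc_on A (fun u => `|P u n|).
Hypothesis hquasi : forall (n : nat) (u v : nat -> K), linf_bounded u -> linf_bounded v ->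
  `|P (fun i => u i + v i) n| <= M * (`|P u n| + `|P v n|).
Hypothesis hcont : forall e : K, 0 < e -> exists2 d : K, 0 < d &
  forall u, linf_bounded u -> (forall i, `|u i| <= d) -> forall i, `|P u i| <= e.

Lemma P_eq0_of_M_eq0 (u : nat -> K) : M = 0 -> linf_bounded u -> forall n, P u n = 0.
Proof.
move=> M0 ub n; have zb : linf_bounded (fun _ => 0 : K) by exists 0 => i; rewrite normr0.
have := hquasi n ub zb; rewrite hP0 M0 mul0r.
by under eq_fun do rewrite addr0; rewrite normr_le0 => /eqP.
Qed.

Lemma normP_le_perturb (e : K) : 0 < e -> exists2 d : K, 0 < d &
  forall u w, linf_bounded u -> (forall i, `|w i - u i| <= d) ->
  forall n, `|P w n| <= M * (`|P u n| + e).
Proof.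
move=> e0; have [d d0 Pd] := hcont e0; exists d => // u w ub wud n.
have vb : linf_bounded (fun i => w i - u i) by exists d.
apply: le_trans (_ : `|P (fun i => u i + (w i - u i)) n| <= _).
  by under eq_fun do rewrite addrC subrK.
by apply: le_trans (hquasi n ub vb) _; rewrite ler_wpM2l // lerD2l Pd.
Qed.

Definition tail_sublevel (c : K) (k : nat) : set (X -> K) :=
  [set f | dual f /\ (forall m, `|f (x m)| <= k%:R) /\
           forall n, (k <= n)%N -> `|P (fun m => f (x m)) n| <= c].

Lemma tail_sublevel_nondecreasing (c : K) (i j : nat) : (i <= j)%N ->
  tail_sublevel c i `<=` tail_sublevel c j.
Proof.
move=> ij f [df [fi fP]]; split => //; split => [m|n jn].
  by apply: le_trans (fi m) _; rewrite ler_nat.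
by apply: fP; apply: leq_trans jn.
Qed.

Lemma convex_tail_sublevel (c : K) (k : nat) : convex_fset (tail_sublevel c k).
Proof.
move=> f g [df [fb fP]] [dg [gb gP]] t t01; have /andP[t0 t1] := t01.
have t1' : 0 <= 1 - t by rewrite subr_ge0.
have convex_le (a b r : K) : a <= r -> b <= r -> t * a + (1 - t) * b <= r.
  move=> ar br; apply: le_trans (_ : t * r + (1 - t) * r <= r); last by rewrite -mulrDl subrKC mul1r.
  by rewrite lerD // ler_wpM2l.
split; first exact: dual_convex.
split => [m|n kn].
  apply: le_trans (ler_normD _ _) _; rewrite !normrM (ger0_norm t0) (ger0_norm t1').
  exact: convex_le.
have fxb : linf_bounded (fun m => f (x m)) by exists k%:R.
have gxb : linf_bounded (fun m => g (x m)) by exists k%:R.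
by apply: le_trans (hconv n fxb gxb t01) _; apply: convex_le; [apply: fP | apply: gP].
Qed.

Lemma wstar_closed_tail_sublevel (c : K) (k : nat) : c \is Num.real ->
  wstar_closed (tail_sublevel c k).
Proof.
move=> creal; exists ([set g : {ptws X -> K} | forall m, `|g (x m)| <= k%:R] `&`
  [set g | forall n, (k <= n)%N -> `|P (fun m => g (x m)) n| <= c]); split => //.
apply: (closed_real_sublevelI (D := fun n => (k <= n)%N)
    (F := fun n (g : {ptws X -> K}) => `|P (fun m => g (x m)) n|)
    (closed_ptws_bounded_along (x := x) (realn K k)) creal (fun _ _ => normr_real _)).
move=> n g _ gb cPg.
have Ab : linf_bounded_set [set u : nat -> K | forall m, `|u m| <= k%:R] by exists k%:R.
exact: (@ptws_precomp_continuous X K x g _ (hlsc Ab gb cPg)).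
Qed.

Variables (Kset B : set (X -> K)) (C : K).
Hypothesis xC : forall n, `|x n| <= C.
Hypothesis hBdual : B `<=` dual.
Hypothesis hBgen : I_generates Kset B.
Hypothesis nneg_le_nat : forall a : K, 0 <= a -> exists k : nat, a <= k%:R.

Lemma tail_sublevel_cover (c : K) :
  (forall b, B b -> exists k, forall n, (k <= n)%N -> `|P (fun m => b (x m)) n| <= c) ->
  B = \bigcup_k (B `&` tail_sublevel c k).
Proof.
move=> Bc; apply/seteqP; split => [b Bb|b [k _ []] //].
have [r r0 br] := dual_bounded_seq (hBdual Bb) xC.
have [k1 r_k1] := nneg_le_nat r0.
have [k2 bk2] := Bc b Bb.
exists (maxn k1 k2) => //; split => //; split; first exact: hBdual.
split => [m | n kn].
  by apply: le_trans (br m) (le_trans r_k1 _); rewrite ler_nat leq_maxl.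
by apply: bk2; apply: leq_trans kn; rewrite leq_maxr.
Qed.

Lemma Igen_tail_bound (c : K) : c \is Num.real ->
  (forall b, B b -> exists k, forall n, (k <= n)%N -> `|P (fun m => b (x m)) n| <= c) ->
  forall g, Kset g -> forall e, 0 < e ->
  exists k, forall n, (k <= n)%N -> `|P (fun m => g (x m)) n| <= M * (c + e).
Proof.
move=> creal Bc g; rewrite (hBgen (tail_sublevel_cover Bc)) => -[_ g_approx] e e0.
have hull_sub : conv_hull (\bigcup_k wstar_closed_conv_hull (B `&` tail_sublevel c k))
    `<=` \bigcup_k tail_sublevel c k.
  apply: conv_hull_min.
    apply: convex_bigcup_nondecreasing => [i j|k];
      [exact: tail_sublevel_nondecreasing | exact: convex_tail_sublevel].
  move=> f [k _ fk]; exists k => //; move: f fk.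
  apply: wstar_closed_conv_hull_min; [by move=> ? [] | exact: convex_tail_sublevel |
    exact: wstar_closed_tail_sublevel | exact: subIsetr].
have [d d0 Pd] := normP_le_perturb e0.
have C1 : 0 < C + 1 by rewrite ltr_wpDl // (le_trans (normr_ge0 _) (xC 0%N)).
have [f /hull_sub [k _ [_ [fb fP]]] gf] := g_approx _ (divr_gt0 d0 C1).
exists k => n kn.
have fxb : linf_bounded (fun m => f (x m)) by exists k%:R.
apply: le_trans (Pd _ (fun m => g (x m)) fxb _ n) _; last by rewrite ler_wpM2l // lerD2r fP.
move=> m; apply: le_trans (gf (x m)) _.
rewrite -[leRHS](divfK (lt0r_neq0 C1)) ler_wpM2l ?divr_ge0 ?ltW //.
by rewrite (le_lt_trans (xC m)) // ltrDl.
Qed.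

End TailSublevels.

Theorem theorem3p1 (R : realType) (K : numFieldType) (toR : K -> R)
  (hK : RorC R K toR)
  (X : completeNormedModType K) (Kset B : set (X -> K))
  (hKdual : Kset `<=` dual)
  (hKcomp : compact (Kset : set {ptws X -> K}))
  (hKconv : convex_fset Kset)
  (hBK : B `<=` Kset) (hBgen : I_generates Kset B)
  (P : (nat -> K) -> (nat -> K))
  (hPlinf : forall u, linf_bounded u -> linf_bounded (P u))
  (hP0 : P (fun _ => 0) = (fun _ => 0))
  (hconv : forall (n : nat) (u v : nat -> K), linf_bounded u -> linf_bounded v ->
     forall t : K, 0 <= t <= 1 ->
     `|P (fun i => t * u i + (1 - t) * v i) n| <= t * `|P u n| + (1 - t) * `|P v n|)
  (hlsc : forall (n : nat) (A : set (nat -> K)), linf_bounded_set A ->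
     ptws_lsc_on A (fun u => `|P u n|))
  (M : K) (hM : 0 <= M)
  (hquasi : forall (n : nat) (u v : nat -> K), linf_bounded u -> linf_bounded v ->
     `|P (fun i => u i + v i) n| <= M * (`|P u n| + `|P v n|))
  (hcont : forall e : K, 0 < e -> exists2 d : K, 0 < d &
     forall u, linf_bounded u -> (forall i, `|u i| <= d) -> forall i, `|P u i| <= e) :
  forall x : nat -> X, (exists C : K, forall n, `|x n| <= C) ->
  (ereal_sup [set limn_esup (fun n => (toR `|P (fun m => f (x m)) n|)%:E) | f in Kset]
   <= (toR M)%:E *
      ereal_sup [set limn_esup (fun n => (toR `|P (fun m => f (x m)) n|)%:E) | f in B])%E.
Proof.
move=> x [C xC]; apply: ge_ereal_sup => _ [g Kg <-].
case: (pselect (exists b, B b)) => [B_neq0 | B0]; last first.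
  have B_eq0 : B = set0 by apply/seteqP; split => // b Bb; apply: B0; exists b.
  by move: hBgen Kg; rewrite B_eq0 => /I_generates_set0 ->.
have [M0 | M_neq0] := eqVneq M 0.
  rewrite M0 (RorC_toR0 hK) mul0e.
  apply: le_trans (limn_esup_toR_le hK (a := 0) (k := 0) _) _; last by rewrite RorC_toR0.
  have [b _ gb] := dual_bounded_seq (hKdual g Kg) xC.
  by move=> n _; rewrite (P_eq0_of_M_eq0 hP0 hquasi M0 (ex_intro _ b gb)) normr0.
apply: (limn_esup_toR_le_scale hK _ B_neq0); first by rewrite lt_def M_neq0.
move=> c c0 Bc e e0.
exact: (Igen_tail_bound hM hconv hlsc hquasi hcont xC (fun b Bb => hKdual b (hBK b Bb))
  hBgen (RorC_nneg_le_nat hK) (ger0_real c0) Bc Kg e0).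
Qed.
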